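(* Let $p$ be a prime, let $\chi$ be a Dirichlet character, and let $y$ be a positive integer. If $\prod_{n=1}^y|1+\chi(n)|>2^y/p^2$, then the number of integers $n\in\{1,\dots,y\}$ such that $|\chi(n)-1|>1/\log p$ is less than $16(\log p)^3$. *)

From Stdlib Require Import Reals List Arith ZArith Znumtheory.
From Coquelicot Require Import Coquelicot.
Open Scope R_scope.

Definition dirichlet_character (q : nat) (chi : nat -> C) : Prop :=
  (0 < q)%nat /\
  chi 1%nat = RtoC 1 /\
  (forall m n : nat, chi (m * n)%nat = Cmult (chi m) (chi n)) /\
  (forall n : nat, chi (n + q)%nat = chi n) /\
  (forall n : nat, Nat.gcd n q <> 1%nat -> chi n = RtoC 0) /\
  (forall n : nat, Nat.gcd n q = 1%nat -> chi n <> RtoC 0).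

Definition is_dirichlet_character (chi : nat -> C) : Prop :=
  exists q : nat, dirichlet_character q chi.

Definition prod_abs_one_plus (chi : nat -> C) (y : nat) : R :=
  fold_right Rmult 1 (map (fun n => Cmod (Cplus (RtoC 1) (chi n))) (seq 1 y)).

Definition count_far (chi : nat -> C) (y p : nat) : nat :=
  length (filter (fun n => if Rlt_dec (1 / ln (INR p)) (Cmod (Cminus (chi n) (RtoC 1)))
                           then true else false) (seq 1 y)).

(* Values of a Dirichlet character lie in the closed unit disc, and there the
   parallelogram law gives |1 + z|^2 + |z - 1|^2 <= 4.  Hence every n with
   |chi n - 1| > d := 1 / log p costs a factor 1 - d^2/4 <= exp (- d^2/4) in the
   squared product compared with the trivial bound 4^y.  If k such n occur, the
   hypothesis gives p^-4 < exp (- k d^2/4), i.e. k < 16 (log p)^3. *)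
From Stdlib Require Import Reals List Arith ZArith Znumtheory RList Lia Lra.
From Coquelicot Require Import Coquelicot.
Open Scope R_scope.

Lemma periodic_bounded (f : nat -> R) (q : nat) :
  (0 < q)%nat -> (forall n, f (n + q)%nat = f n) -> exists M, forall n, f n <= M.
Proof.
  intros Hq Hper.
  assert (Hmod : forall k r, f (r + k * q)%nat = f r).
  { induction k as [|k IH]; intros r.
    - now rewrite Nat.add_0_r.
    - replace (r + S k * q)%nat with (r + k * q + q)%nat by lia.
      now rewrite Hper. }
  exists (MaxRlist (map f (seq 0 q))); intros n.
  rewrite (Nat.div_mod_eq n q), Nat.add_comm, Nat.mul_comm, Hmod.
  apply MaxRlist_P1, in_map, in_seq.
  pose proof (Nat.mod_upper_bound n q); lia.
Qed.

Lemma Cmod_mult_pow_succ (f : nat -> C) :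
  (forall m n, f (m * n)%nat = Cmult (f m) (f n)) ->
  forall n k, Cmod (f (n ^ S k)%nat) = Cmod (f n) ^ S k.
Proof.
  intros Hmul n k; induction k as [|k IH].
  - now rewrite Nat.pow_1_r, pow_1.
  - now rewrite Nat.pow_succ_r', Hmul, Cmod_mult, IH.
Qed.

(* If |f n| > 1 then |f (n^k)| = |f n|^k is unbounded. *)
Lemma mult_bounded_Cmod_le_1 (f : nat -> C) (M : R) :
  (forall m n, f (m * n)%nat = Cmult (f m) (f n)) ->
  (forall n, Cmod (f n) <= M) ->
  forall n, Cmod (f n) <= 1.
Proof.
  intros Hmul HM n.
  destruct (Rle_lt_dec (Cmod (f n)) 1) as [Hle | Hgt]; [exact Hle |].
  assert (Habs : Rabs (Cmod (f n)) > 1) by (rewrite Rabs_pos_eq; lra).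
  destruct (Pow_x_infinity _ Habs (M + 1)) as [N HN].
  specialize (HN (S N) (Nat.le_succ_diag_r N)).
  rewrite <- Cmod_mult_pow_succ, Rabs_pos_eq in HN by (auto using Cmod_ge_0).
  specialize (HM (n ^ S N)%nat); lra.
Qed.

Lemma dirichlet_character_Cmod_le_1 (q : nat) (chi : nat -> C) :
  dirichlet_character q chi -> forall n, Cmod (chi n) <= 1.
Proof.
  intros (Hq & _ & Hmul & Hper & _).
  destruct (periodic_bounded (fun n => Cmod (chi n)) q Hq) as [M HM].
  { intros n; now rewrite Hper. }
  exact (mult_bounded_Cmod_le_1 chi M Hmul HM).
Qed.

Lemma Cmod_add_1_sqr_le (z : C) :
  Cmod z <= 1 -> Cmod (Cplus (RtoC 1) z) ^ 2 + Cmod (Cminus z (RtoC 1)) ^ 2 <= 4.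
Proof.
  intros Hz.
  assert (Hz2 : Cmod z ^ 2 <= 1) by (pose proof (Cmod_ge_0 z); nra).
  rewrite !Cmod2_alt in *.
  destruct z as [a b]; cbn in *; nra.
Qed.

Section FarProduct.

Variables (f : nat -> C) (d : R).
Hypothesis f_Cmod_le_1 : forall n, Cmod (f n) <= 1.
Hypothesis d_ge0 : 0 <= d.

Definition far (n : nat) : bool :=
  if Rlt_dec d (Cmod (Cminus (f n) (RtoC 1))) then true else false.

Lemma Cmod_add_1_sqr_le_far (n : nat) :
  Cmod (Cplus (RtoC 1) (f n)) ^ 2 <= 4 * (if far n then 1 - d ^ 2 / 4 else 1).
Proof.
  pose proof (Cmod_add_1_sqr_le _ (f_Cmod_le_1 n)).
  pose proof (pow2_ge_0 (Cmod (Cminus (f n) (RtoC 1)))).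
  unfold far; destruct Rlt_dec; nra.
Qed.

Lemma prod_Cmod_add_1_sqr_le (l : list nat) :
  (fold_right Rmult 1 (map (fun n => Cmod (Cplus (RtoC 1) (f n))) l)) ^ 2
  <= 4 ^ length l * (1 - d ^ 2 / 4) ^ length (filter far l).
Proof.
  induction l as [|n l IH]; cbn [map fold_right length filter]; [lra |].
  set (P := fold_right Rmult 1 _) in *.
  set (r := 1 - d ^ 2 / 4) in *.
  pose proof (Cmod_add_1_sqr_le_far n) as Hn.
  rewrite Rpow_mult_distr.
  destruct (far n); cbn [length].
  - replace (4 ^ S (length l) * r ^ S (length (filter far l)))
      with (4 * r * (4 ^ length l * r ^ length (filter far l))) by (cbn; ring).
    apply Rmult_le_compat; auto using pow2_ge_0; lra.
  - replace (4 ^ S (length l) * r ^ length (filter far l))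
      with (4 * (4 ^ length l * r ^ length (filter far l))) by (cbn; ring).
    apply Rmult_le_compat; auto using pow2_ge_0; lra.
Qed.

End FarProduct.

Lemma exp_pow (a : R) (k : nat) : exp a ^ k = exp (INR k * a).
Proof.
  rewrite <- (exp_ln (exp a ^ k)) by (apply pow_lt, exp_pos).
  now rewrite ln_pow, ln_exp by apply exp_pos.
Qed.

Lemma count_lt_of_exp_lt (L : R) (k : nat) :
  / 2 < L -> exp (- (4 * L)) < (1 - (1 / L) ^ 2 / 4) ^ k -> INR k < 16 * L ^ 3.
Proof.
  intros HL Hk.
  set (d := 1 / L) in *.
  assert (Hd : 0 < d < 2).
  { unfold d; split; [apply Rdiv_lt_0_compat; lra |].
    apply (Rmult_lt_reg_r L); [lra |]; field_simplify; lra. }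
  assert (Hexp : (1 - d ^ 2 / 4) ^ k <= exp (INR k * - (d ^ 2 / 4))).
  { rewrite <- exp_pow; apply pow_incr; split; [nra |].
    pose proof (exp_ineq1_le (- (d ^ 2 / 4))); lra. }
  assert (Hlt : - (4 * L) < INR k * - (d ^ 2 / 4)) by (apply exp_lt_inv; lra).
  replace (INR k) with (INR k * d ^ 2 * L ^ 2) by (unfold d; field; lra).
  replace (16 * L ^ 3) with (16 * L * L ^ 2) by ring.
  apply Rmult_lt_compat_r; [apply pow_lt |]; lra.
Qed.

Theorem lemma4p3 (p : nat) (chi : nat -> C) (y : nat) :
  prime (Z.of_nat p) ->
  is_dirichlet_character chi ->
  (0 < y)%nat ->
  prod_abs_one_plus chi y > 2 ^ y / (INR p) ^ 2 ->
  INR (count_far chi y p) < 16 * (ln (INR p)) ^ 3.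
Proof.
  intros Hp [q Hchi] _ Hprod.
  assert (Hp2 : 2 <= INR p).
  { apply prime_ge_2 in Hp. replace 2 with (INR 2) by reflexivity. apply le_INR; lia. }
  set (L := ln (INR p)).
  assert (HL : / 2 < L) by (pose proof ln_lt_2; enough (ln 2 <= L) by lra; apply ln_le; lra).
  apply count_lt_of_exp_lt; [exact HL |].
  assert (Hd : 0 <= 1 / L) by (apply Rlt_le, Rdiv_lt_0_compat; lra).
  pose proof (prod_Cmod_add_1_sqr_le chi (1 / L)
    (dirichlet_character_Cmod_le_1 q chi Hchi) Hd (seq 1 y)) as Hbound.
  rewrite length_seq in Hbound.
  change (length (filter _ (seq 1 y))) with (count_far chi y p) in Hbound.
  set (r := (1 - (1 / L) ^ 2 / 4) ^ count_far chi y p) in *.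
  assert (Hexp : exp (- (4 * L)) = / INR p ^ 4).
  { replace (4 * L) with (INR 4 * L) by (cbn; ring).
    unfold L; now rewrite exp_Ropp, <- exp_pow, exp_ln by lra. }
  assert (Hsqr : (2 ^ y / INR p ^ 2) ^ 2 = 4 ^ y * / INR p ^ 4).
  { replace 4 with (2 ^ 2) by ring. rewrite <- pow_mult, Nat.mul_comm, pow_mult.
    field; lra. }
  assert (Hpos : 0 < 2 ^ y / INR p ^ 2)
    by (apply Rdiv_lt_0_compat; apply pow_lt; lra).
  assert (H4y : 0 < 4 ^ y) by (apply pow_lt; lra).
  rewrite Hexp; apply (Rmult_lt_reg_l (4 ^ y)); [exact H4y |].
  rewrite <- Hsqr; unfold prod_abs_one_plus in Hprod; nra.
Qed.
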